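(* There is a function $\Gamma:\mathbb R\to\mathbb R$ such that for every $t\in\mathbb R$, $$\lim_{n\to\infty}\frac1n\log\mathbb{E}\big(e^{tH_n}\big)=\Gamma(t).$$
   Context: Standing setup (discrete-time Hawkes process, DTHP). Let $(a_i)_{i=0}^\infty$ be a sequence of strictly positive real numbers with $\sum_{i=0}^\infty a_i<1$ and $\sum_{i=1}^\infty i\,a_i<\infty$. The arrival process $\{\xi_n\}_{n\ge1}$ is a sequence of $\{0,1\}$-valued random variables on a probability space $(\Omega,\mathcal F,\mathbb P)$ with $\mathbb{P}(\xi_1=1)=a_0$, $\mathbb P(\xi_1=0)=1-a_0$, and for $n\ge2$, $$\mathbb{P}(\xi_n=1\mid \xi_1,\dots,\xi_{n-1})=a_0+\sum_{i=1}^{n-1}a_{n-i}\xi_i,\qquad \mathbb{P}(\xi_n=0\mid \xi_1,\dots,\xi_{n-1})=1-\Big(a_0+\sum_{i=1}^{n-1}a_{n-i}\xi_i\Big).$$ The DTHP is $H_n=\sum_{i=1}^n\xi_i$, and $\mathcal F_n=\sigma(\xi_1,\dots,\xi_n)$. *)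

From HB Require Import structures.
From mathcomp Require Import all_boot all_order all_algebra.
From mathcomp Require Import all_classical all_reals all_analysis.
Set Implicit Arguments. Unset Strict Implicit. Unset Printing Implicit Defensive.
Import Order.TTheory GRing.Theory Num.Theory numFieldNormedType.Exports.
Local Open Scope classical_set_scope.
Local Open Scope ring_scope.

Definition dthp_kernel (R : realType) (a : nat -> R) : Prop :=
  (forall i, 0 < a i) /\
  cvg (series a @ \oo) /\ limn (series a) < 1 /\
  cvg (series (fun i => i%:R * a i) @ \oo).

(* Conditional intensity of xi_{n+1} given (xi_1,...,xi_n) = x
   (x : seq bool of size n, entry j (0-based) is the value of xi_{j+1}):
   a_0 + sum_{i=1}^n a_{n+1-i} xi_i. *)
Definition intensity (R : realType) (a : nat -> R) (n : nat) (x : seq bool) : R :=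
  a 0%N + \sum_(j < n) a (n - j)%N * (nth false x j)%:R.

(* The cylinder event {xi_1 = x_1, ..., xi_n = x_n}; the process is indexed
   from 1 as in the paper (xi 0 is unused). *)
Definition cyl (T : Type) (R : realType) (xi : nat -> T -> R) (n : nat)
  (x : seq bool) : set T :=
  [set w | forall j, (j < n)%N -> xi j.+1 w = (nth false x j)%:R].

(* xi is a DTHP with kernel a on the probability space P: each xi_n
   (n >= 1) is a measurable {0,1}-valued random variable, and for every
   n and every (x_1,...,x_n,b) in {0,1}^{n+1},
   P(xi_1=x_1,..,xi_n=x_n, xi_{n+1}=b)
     = P(xi_1=x_1,..,xi_n=x_n) * P(xi_{n+1}=b | xi_1=x_1,..,xi_n=x_n)
   with the prescribed conditional probabilities (for n = 0 this reads
   P(xi_1 = 1) = a_0, P(xi_1 = 0) = 1 - a_0). *)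
Definition is_DTHP (d : measure_display) (T : measurableType d) (R : realType)
  (P : probability T R) (a : nat -> R) (xi : nat -> T -> R) : Prop :=
  (forall n, (0 < n)%N -> measurable_fun setT (xi n)) /\
  (forall n w, (0 < n)%N -> xi n w = 0 \/ xi n w = 1) /\
  (forall n (x : seq bool) (b : bool), size x = n ->
     P (cyl xi n.+1 (rcons x b)) =
     (P (cyl xi n x) *
      (if b then intensity a n x else 1 - intensity a n x)%:E)%E).

Definition H (T : Type) (R : realType) (xi : nat -> T -> R) (n : nat) : T -> R :=
  fun w => \sum_(1 <= i < n.+1) xi i w.

From HB Require Import structures.
From mathcomp Require Import all_boot all_order all_algebra.
From mathcomp Require Import all_classical all_reals all_analysis.
From mathcomp Require Import lra ring.
Import Order.TTheory GRing.Theory Num.Theory numFieldNormedType.Exports.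
Local Open Scope classical_set_scope.
Local Open Scope ring_scope.
Set Implicit Arguments. Unset Strict Implicit.

(* Write Z_n(t) = E exp(t H_n).  Conditionally on the first n steps, the process
   continues as a DTHP whose intensities are raised by the excitation the past
   leaves behind, and raising the intensities can only increase the
   expectation of a nondecreasing functional of the future.  Hence
   Z_(n+m)(t) >= Z_n(t) Z_m(t) for t >= 0 and Z_(n+m)(t) <= Z_n(t) Z_m(t) for
   t <= 0, while |log Z_n(t)| <= |t| n; Fekete's lemma applied to log Z_n(t)
   or to -log Z_n(t) gives the limit. *)

Section HawkesMean.
Variables (R : realType) (a : nat -> R).

(* An excitation [c] records the influence of the observed past: [c k] is the
   extra intensity it contributes [k.+1] steps ahead, so the next step has
   intensity [a 0 + c 0].  [hawkes_mean c m g] is the expectation of [g] at the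
   next [m] steps of the process started with excitation [c]. *)
Definition excitation_step (b : bool) (c : nat -> R) : nat -> R :=
  fun k => c k.+1 + (if b then a k.+1 else 0).

Fixpoint excitation_after (c : nat -> R) (x : seq bool) : nat -> R :=
  if x is b :: x' then excitation_after (excitation_step b c) x' else c.

Fixpoint hawkes_mean (c : nat -> R) (m : nat) (g : seq bool -> R) : R :=
  if m is m'.+1 then
    (1 - (a 0 + c 0))
      * hawkes_mean (excitation_step false c) m' (fun y => g (false :: y))
    + (a 0 + c 0)
      * hawkes_mean (excitation_step true c) m' (fun y => g (true :: y))
  else g [::].

Definition admissible (c : nat -> R) : Prop :=
  forall k, 0 <= c k /\ c k + \sum_(i < k.+1) a i <= 1.

Definition bseq_nondecreasing (g : seq bool -> R) : Prop :=
  forall x y, g (x ++ false :: y) <= g (x ++ true :: y).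

Lemma excitation_afterE x c k :
  excitation_after c x k =
  c (k + size x)%N + \sum_(j < size x) a (size x + k - j)%N * (nth false x j)%:R.
Proof.
elim: x c k => [|b x IH] c k /=; first by rewrite addn0 big_ord0 addr0.
rewrite IH big_ord_recl /= /excitation_step addnS subn0 addSn (addnC k).
by case: b; rewrite ?mulr1 ?mulr0; ring.
Qed.

Lemma hawkes_mean_cat n m c g :
  hawkes_mean c (n + m) g =
  hawkes_mean c n
    (fun x => hawkes_mean (excitation_after c x) m (fun y => g (x ++ y))).
Proof. by elim: n c g => [|n IH] c g //=; rewrite !IH. Qed.

Lemma hawkes_meanMr m c g k :
  hawkes_mean c m (fun x => g x * k) = hawkes_mean c m g * k.
Proof.
elim: m c g => [|m IH] c g //=.
by rewrite (IH _ (fun y => g (false :: y))) (IH _ (fun y => g (true :: y))); ring.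
Qed.

Lemma hawkes_mean_cst m c k : hawkes_mean c m (fun _ => k) = k.
Proof. by elim: m c => [|m IH] c //=; rewrite !IH; ring. Qed.

Lemma hawkes_meanN m c g :
  hawkes_mean c m (fun x => - g x) = - hawkes_mean c m g.
Proof.
rewrite -mulrN1 -hawkes_meanMr; congr hawkes_mean.
by apply: funext => x; rewrite mulrN1.
Qed.

Hypothesis a_ge0 : forall i, 0 <= a i.

Lemma admissible_step b c : admissible c -> admissible (excitation_step b c).
Proof.
move=> Hc k; rewrite /excitation_step; have [c0 c1] := Hc k.+1.
move: c1; rewrite big_ord_recr /= => c1; have := a_ge0 k.+1.
by case: b; split; rewrite ?addr0 //; [apply: addr_ge0 | lra | lra].
Qed.

Lemma admissible_after x c : admissible c -> admissible (excitation_after c x).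
Proof. by elim: x c => [|b x IH] c Hc //=; apply/IH/admissible_step. Qed.

Lemma admissible_intensity c : admissible c -> 0 <= a 0 + c 0 <= 1.
Proof.
move=> Hc; have [c0] := Hc 0%N; rewrite big_ord1 addrC => c1.
by rewrite c1 addr_ge0.
Qed.

Lemma ler_hawkes_mean m c g h : admissible c ->
  (forall x, size x = m -> g x <= h x) -> hawkes_mean c m g <= hawkes_mean c m h.
Proof.
elim: m c g h => [|m IH] c g h Hc gh /=; first exact: gh.
have /andP[l0 l1] := admissible_intensity Hc.
have le_next b : hawkes_mean (excitation_step b c) m (fun y => g (b :: y))
    <= hawkes_mean (excitation_step b c) m (fun y => h (b :: y)).
  by apply: IH => [|x sx]; [exact: admissible_step | apply: gh; rewrite /= sx].
by apply: lerD; apply: ler_wpM2l; rewrite ?subr_ge0.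
Qed.

Lemma eq_hawkes_mean m c g h : admissible c ->
  (forall x, size x = m -> g x = h x) -> hawkes_mean c m g = hawkes_mean c m h.
Proof.
move=> Hc gh; apply/eqP; rewrite eq_le.
by rewrite !ler_hawkes_mean // => x sx; rewrite gh.
Qed.

Lemma hawkes_mean_gt0 m c g : admissible c ->
  (forall x, size x = m -> 0 < g x) -> 0 < hawkes_mean c m g.
Proof.
elim: m c g => [|m IH] c g Hc g_gt0 /=; first exact: g_gt0.
have /andP[l0 l1] := admissible_intensity Hc.
have pos b : 0 < hawkes_mean (excitation_step b c) m (fun y => g (b :: y)).
  by apply: IH => [|x sx]; [exact: admissible_step | apply: g_gt0; rewrite /= sx].
have := pos false; have := pos true; nra.
Qed.

(* A larger excitation makes a [true] step more likely, and a [true] step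
   leaves a larger excitation behind; both can only increase a nondecreasing
   [g]. *)
Lemma hawkes_mean_excitation_monotone m c c' g :
  admissible c -> admissible c' -> (forall k, c k <= c' k) ->
  bseq_nondecreasing g -> hawkes_mean c m g <= hawkes_mean c' m g.
Proof.
elim: m c c' g => [|m IH] c c' g Hc Hc' cc' g_nd //=.
have /andP[l0 l1] := admissible_intensity Hc.
have ll' : a 0 + c 0 <= a 0 + c' 0 by rewrite lerD2l.
have g_nd_cons b : bseq_nondecreasing (fun y => g (b :: y)).
  by move=> x y; exact: (g_nd (b :: x)).
have le_next b : hawkes_mean (excitation_step b c) m (fun y => g (b :: y))
    <= hawkes_mean (excitation_step b c') m (fun y => g (b :: y)).
  apply: IH => [||k|]; [exact: admissible_step.. | | exact: g_nd_cons].
  by rewrite /excitation_step lerD2r.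
have le_false_true :
    hawkes_mean (excitation_step false c') m (fun y => g (false :: y))
    <= hawkes_mean (excitation_step true c') m (fun y => g (true :: y)).
  apply: le_trans (_ : _ <= hawkes_mean (excitation_step true c') m
                             (fun y => g (false :: y))) _.
    apply: IH => [||k|]; [exact: admissible_step.. | | exact: g_nd_cons].
    by rewrite /excitation_step lerD2l.
  apply: ler_hawkes_mean => [|x _]; first exact: admissible_step.
  exact: (g_nd [::]).
move: (le_next false) (le_next true) le_false_true.
set A := hawkes_mean _ _ _; set A' := hawkes_mean _ _ _.
set B := hawkes_mean _ _ _; set B' := hawkes_mean _ _ _.
move=> AA' BB' A'B'.
have : (a 0 + c 0) * (B' - A') <= (a 0 + c' 0) * (B' - A').
  by apply: ler_wpM2r; rewrite ?subr_ge0.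
have : (1 - (a 0 + c 0)) * A <= (1 - (a 0 + c 0)) * A'.
  by rewrite ler_wpM2l ?subr_ge0.
have : (a 0 + c 0) * B <= (a 0 + c 0) * B' by rewrite ler_wpM2l.
lra.
Qed.

End HawkesMean.

Section Fekete.
Variables (R : realType) (f : nat -> R).
Hypotheses (f_ge0 : forall n, 0 <= f n)
  (f_superadd : forall n m, f n + f m <= f (n + m)%N).

Lemma superadditive_natrM q K : q%:R * f K <= f (q * K)%N.
Proof.
elim: q => [|q IH]; first by rewrite mul0r.
rewrite mulSn -addn1 natrD mulrDl mul1r addrC.
by apply: le_trans (f_superadd _ _); rewrite lerD2l.
Qed.

Lemma superadditive_lower_bound K n :
  (0 < K)%N -> f K / K%:R * n%:R <= f n + f K.
Proof.
move=> K_gt0; have KR : 0 < K%:R :> R by rewrite ltr0n.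
set q := (n %/ K)%N.
have qf : q%:R * f K <= f n.
  rewrite [in f n](divn_eq n K) -/q.
  apply: le_trans (superadditive_natrM q K) _.
  by apply: le_trans (f_superadd _ _); rewrite lerDl.
have nq : n%:R <= (q%:R + 1) * K%:R :> R.
  by rewrite -[1]/(1%:R) -natrD addn1 -natrM ler_nat ltnW // ltn_ceil.
apply: le_trans (_ : f K / K%:R * ((q%:R + 1) * K%:R) <= _).
  by rewrite ler_wpM2l // divr_ge0 // ltW.
have -> : f K / K%:R * ((q%:R + 1) * K%:R) = q%:R * f K + f K.
  by field; rewrite gt_eqF.
by rewrite lerD2r.
Qed.

Lemma fekete C : (forall n, f n <= C * n%:R) ->
  exists L : R, (fun n => f n / n%:R) @ \oo --> L.
Proof.
move=> fC; set S := [set f n.+1 / n.+1%:R | n in [set: nat]].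
have hS : has_sup S.
  split; first by exists (f 1%N / 1%:R), 0%N.
  by exists C => _ [n _ <-]; rewrite ler_pdivrMr ?ltr0Sn.
exists (sup S); apply/cvgrPdist_le => e e_gt0.
have e2_gt0 : 0 < e / 2 by rewrite divr_gt0.
have [_ [K _ <-] supK] := sup_adherent e2_gt0 hS.
have [N NfK] : exists N : nat, f K.+1 < e / 2 * N%:R.
  exists (Num.bound (f K.+1 / (e / 2))).+1.
  rewrite -ltr_pdivrMl // mulrC; apply: lt_le_trans (archi_boundP _) _.
    by rewrite divr_ge0 // ltW.
  by rewrite ler_nat.
exists N.+1 => // n /= Nn.
have nR : 0 < n%:R :> R by rewrite ltr0n (leq_trans _ Nn).
have le_sup : f n / n%:R <= sup S.
  by apply: sup_upper_bound => //; exists n.-1; rewrite // prednK // -(ltr0n R).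
rewrite ger0_norm ?subr_ge0 // lerBlDl -lerBlDr ler_pdivlMr //.
have lb := superadditive_lower_bound n (ltn0Sn K).
set y := f K.+1 / K.+1%:R in supK lb.
have : e / 2 * N%:R <= e / 2 * n%:R.
  by apply: ler_wpM2l; [rewrite ltW | rewrite ler_nat ltnW].
have : (sup S - e / 2) * n%:R <= y * n%:R by apply: ler_wpM2r; rewrite ?ltW.
have -> : (sup S - e) * n%:R = (sup S - e / 2) * n%:R - e / 2 * n%:R by field.
lra.
Qed.

End Fekete.

Fixpoint bool_words (n : nat) : seq (seq bool) :=
  if n is n'.+1 then
    [seq rcons x b | x <- bool_words n', b <- [:: false; true]]
  else [:: [::]].

Lemma size_bool_words n x : x \in bool_words n -> size x = n.
Proof.
elim: n x => [|n IH] x; first by rewrite inE => /eqP ->.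
move=> /flatten_mapP[y /IH sy].
by rewrite !inE => /orP[] /eqP ->; rewrite size_rcons sy.
Qed.

Lemma big_bool_wordsS (R : realType) n (F : seq bool -> R) :
  \sum_(x <- bool_words n.+1) F x =
  \sum_(x <- bool_words n) (F (rcons x false) + F (rcons x true)).
Proof.
rewrite /= big_flatten /= big_map; apply: eq_bigr => x _.
by rewrite big_cons big_seq1.
Qed.

Section Cylinders.
Variables (T : Type) (R : realType) (xi : nat -> T -> R).

Fixpoint trajectory (n : nat) (w : T) : seq bool :=
  if n is n'.+1 then rcons (trajectory n' w) (xi n'.+1 w == 1) else [::].

Lemma cyl0 x : cyl xi 0 x = setT.
Proof. by apply/seteqP; split => w //= _ j. Qed.

Lemma cylS n x :
  cyl xi n.+1 x = cyl xi n x `&` [set w | xi n.+1 w = (nth false x n)%:R].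
Proof.
apply/seteqP; split => w /=.
  by move=> h; split; [move=> j jn; apply/h/ltnW | apply: h].
by move=> [h1 h2] j; rewrite ltnS leq_eqVlt => /orP[/eqP -> //|]; exact: h1.
Qed.

Lemma cyl_rcons n x b : size x = n -> cyl xi n (rcons x b) = cyl xi n x.
Proof.
by move=> sx; apply/seteqP; split => w /= h j jn;
  move: (h j jn); rewrite nth_rcons sx jn.
Qed.

Hypothesis xi01 : forall n v, (0 < n)%N -> xi n v = 0 \/ xi n v = 1.

Lemma sum_indic_cyl n (g : seq bool -> R) w :
  \sum_(x <- bool_words n) g x * \1_(cyl xi n x) w = g (trajectory n w).
Proof.
elim: n g => [|n IH] g; first by rewrite /= big_seq1 cyl0 indicT /= mulr1.
rewrite big_bool_wordsS.
transitivity (\sum_(x <- bool_words n)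
   (g (rcons x false) * \1_([set v | xi n.+1 v = 0]) w
    + g (rcons x true) * \1_([set v | xi n.+1 v = 1]) w) * \1_(cyl xi n x) w).
  rewrite big_seq [RHS]big_seq; apply: eq_bigr => x /size_bool_words sx.
  by rewrite !cylS !cyl_rcons // !nth_rcons sx ltnn eqxx !indicI /=; ring.
rewrite IH /= !indicE.
have [e|e] := @xi01 n.+1 w isT.
- rewrite (@mem_set _ [set v | xi n.+1 v = 0] w e) memNset /= ?e; last first.
    by apply/eqP; rewrite eq_sym oner_eq0.
  by rewrite eq_sym oner_eq0 mulr1 mulr0 addr0.
- rewrite (@mem_set _ [set v | xi n.+1 v = 1] w e) memNset /= ?e; last first.
    by apply/eqP; rewrite oner_eq0.
  by rewrite eqxx mulr1 mulr0 add0r.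
Qed.

Lemma H_trajectory n w : H xi n w = (count id (trajectory n w))%:R.
Proof.
elim: n => [|n IH]; first by rewrite /H big_geq.
rewrite /H big_nat_recr //= -/(H xi n w) IH -cats1 count_cat /= natrD addn0.
congr (_ + _); have [->|->] := @xi01 n.+1 w isT.
  by rewrite eq_sym oner_eq0.
by rewrite eqxx.
Qed.

End Cylinders.

Lemma measurable_cyl (d : measure_display) (T : measurableType d) (R : realType)
  (xi : nat -> T -> R) : (forall n, (0 < n)%N -> measurable_fun setT (xi n)) ->
  forall n x, measurable (cyl xi n x).
Proof.
move=> mxi; elim=> [|n IH] x; first by rewrite cyl0.
rewrite cylS; apply: measurableI => //.
have := mxi n.+1 isT measurableT [set (nth false x n)%:R] (measurable_set1 _).
by rewrite setTI.
Qed.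

Section ExpCount.
Variables (R : realType) (t : R).

Definition expcount (x : seq bool) : R := expR (t * (count id x)%:R).

Lemma expcount_cat x y : expcount (x ++ y) = expcount x * expcount y.
Proof. by rewrite /expcount count_cat natrD mulrDr expRD. Qed.

Lemma expcount_bounds x :
  expR (- (`|t| * (size x)%:R)) <= expcount x <= expR (`|t| * (size x)%:R).
Proof.
have c_ge0 : 0 <= (count id x)%:R :> R by [].
have c_le : (count id x)%:R <= (size x)%:R :> R by rewrite ler_nat count_size.
rewrite /expcount !ler_expR; case: (lerP 0 t) => t0.
  by rewrite ger0_norm //; apply/andP; split; nra.
by rewrite ltr0_norm //; apply/andP; split; nra.
Qed.

Lemma expcount_nondecreasing : 0 <= t -> bseq_nondecreasing expcount.
Proof.
move=> t0 x y; rewrite /expcount ler_expR !count_cat /= !natrD.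
by apply: ler_wpM2l => //; lra.
Qed.

Lemma expcount_nonincreasing :
  t <= 0 -> bseq_nondecreasing (fun x => - expcount x).
Proof.
move=> t0 x y; rewrite lerN2 /expcount ler_expR !count_cat /= !natrD.
by apply: ler_wnM2l => //; lra.
Qed.

End ExpCount.

Lemma dthp_kernel_ge0 (R : realType) (a : nat -> R) :
  dthp_kernel a -> forall i, 0 <= a i.
Proof. by case=> a_gt0 _ i; exact/ltW. Qed.

Lemma admissible0 (R : realType) (a : nat -> R) :
  dthp_kernel a -> admissible a (fun _ => 0).
Proof.
move=> [a_gt0 [a_cvg [a_lt1 _]]] k; split => //; rewrite add0r.
have a_nd : nondecreasing_seq (series a).
  apply/nondecreasing_seqP => n; rewrite /series /= big_nat_recr //= lerDl.
  exact: ltW.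
have := nondecreasing_cvgn_le a_nd a_cvg k.+1.
by rewrite /series /= big_mkord => /le_trans; apply; exact: ltW.
Qed.

Section HawkesProcess.
Variables (d : measure_display) (T : measurableType d) (R : realType).
Variables (P : probability T R) (a : nat -> R) (xi : nat -> T -> R).
Hypotheses (ker : dthp_kernel a) (dthp : is_DTHP P a xi).

Lemma sum_prob_cyl n (g : seq bool -> R) :
  \sum_(x <- bool_words n) g x * fine (P (cyl xi n x)) =
  hawkes_mean a (fun _ => 0) n g.
Proof.
have [mxi [_ Pcyl]] := dthp.
elim: n g => [|n IH] g; first by rewrite /= big_seq1 cyl0 probability_setT mulr1.
rewrite big_bool_wordsS -addn1 hawkes_mean_cat.
transitivity (\sum_(x <- bool_words n)
  ((g (rcons x false) * (1 - intensity a n x)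
    + g (rcons x true) * intensity a n x) * fine (P (cyl xi n x)))).
  rewrite big_seq [RHS]big_seq; apply: eq_bigr => x /size_bool_words sx.
  have Pcyl_fin y : P (cyl xi n y) \is a fin_num.
    exact: fin_num_measure (measurable_cyl mxi _ _).
  by rewrite !addn1 !Pcyl // !fineM //=; ring.
rewrite IH; apply: (eq_hawkes_mean (dthp_kernel_ge0 ker)) => [|x sx /=].
  exact: admissible0.
by rewrite !cats1 /intensity excitation_afterE sx addn0 add0r; ring.
Qed.

Lemma expectation_expH t n :
  ('E_P[fun w => expR (t * H xi n w)])%E =
  (\sum_(x <- bool_words n) expcount t x * fine (P (cyl xi n x)))%:E.
Proof.
have [mxi [xi01 _]] := dthp; have mcyl := measurable_cyl mxi.
rewrite unlock.
transitivity (\int[P]_w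
  (\sum_(x <- bool_words n) (expcount t x * \1_(cyl xi n x) w)%:E))%E.
  by apply: eq_integral => w _; rewrite sumEFin sum_indic_cyl // H_trajectory.
rewrite ge0_integral_sum //; last 2 first.
- move=> x; apply/measurable_realfun.measurable_EFinP.
  exact: measurable_realfun.measurable_funM.
- by move=> x w _; rewrite lee_fin mulr_ge0 // ?expR_ge0.
rewrite -sumEFin; apply: eq_bigr => x _.
under eq_integral do rewrite EFinM.
rewrite ge0_integralZl //.
- by rewrite integral_indic // setIT EFinM fineK // fin_num_measure.
- exact/measurable_realfun.measurable_EFinP/measurable_realfun.measurable_indic.
- by rewrite lee_fin expR_ge0.
Qed.

Lemma fine_expectation_expH t n :
  fine ('E_P[fun w => expR (t * H xi n w)])%E =
  hawkes_mean a (fun _ => 0) n (expcount t).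
Proof. by rewrite expectation_expH sum_prob_cyl. Qed.

End HawkesProcess.

Section LogMomentGenerating.
Variables (R : realType) (a : nat -> R) (t : R).
Hypotheses (a_ge0 : forall i, 0 <= a i) (adm0 : admissible a (fun _ => 0)).

Local Notation Z n := (hawkes_mean a (fun _ => 0) n (expcount t)).

Let adm_after x : admissible a (excitation_after a (fun _ => 0) x).
Proof. exact: admissible_after. Qed.

Lemma hawkes_mgf_gt0 n : 0 < Z n.
Proof. by apply: hawkes_mean_gt0 => // x _; exact: expR_gt0. Qed.

Lemma abs_ln_hawkes_mgf n : `|ln (Z n)| <= `|t| * n%:R.
Proof.
have bound x : size x = n ->
    expR (- (`|t| * n%:R)) <= expcount t x <= expR (`|t| * n%:R).
  by move=> <-; exact: expcount_bounds.
have Z_ge : expR (- (`|t| * n%:R)) <= Z n.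
  rewrite -[leLHS](hawkes_mean_cst a n (fun _ => 0)).
  by apply: ler_hawkes_mean => // x /bound /andP[].
have Z_le : Z n <= expR (`|t| * n%:R).
  rewrite -[leRHS](hawkes_mean_cst a n (fun _ => 0)).
  by apply: ler_hawkes_mean => // x /bound /andP[].
have Z_pos : Z n \is Num.pos by rewrite posrE hawkes_mgf_gt0.
rewrite ler_norml; apply/andP; split.
  by rewrite -(expRK (- _)) ler_ln ?posrE ?expR_gt0.
by rewrite -(expRK (_ * _)) ler_ln ?posrE ?expR_gt0.
Qed.

Lemma hawkes_mgfD n m :
  Z (n + m) = hawkes_mean a (fun _ => 0) n
    (fun x => hawkes_mean a (excitation_after a (fun _ => 0) x) m (expcount t)
              * expcount t x).
Proof.
rewrite hawkes_mean_cat; congr hawkes_mean; apply: funext => x.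
rewrite -hawkes_meanMr; congr hawkes_mean; apply: funext => y.
by rewrite expcount_cat mulrC.
Qed.

Lemma hawkes_mgf_supermul n m : 0 <= t -> Z n * Z m <= Z (n + m).
Proof.
move=> t_ge0; rewrite hawkes_mgfD -hawkes_meanMr.
apply: ler_hawkes_mean => // x _; rewrite [leLHS]mulrC ler_pM2r ?expR_gt0 //.
apply: hawkes_mean_excitation_monotone => // [k|].
  by case: (adm_after x k).
exact: expcount_nondecreasing.
Qed.

Lemma hawkes_mgf_submul n m : t <= 0 -> Z (n + m) <= Z n * Z m.
Proof.
move=> t_le0; rewrite hawkes_mgfD -hawkes_meanMr.
apply: ler_hawkes_mean => // x _; rewrite [leRHS]mulrC ler_pM2r ?expR_gt0 //.
rewrite -lerN2 -!hawkes_meanN.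
apply: hawkes_mean_excitation_monotone => // [k|].
  by case: (adm_after x k).
exact: expcount_nonincreasing.
Qed.

Lemma cvg_ln_hawkes_mgf : exists L : R, (fun n => ln (Z n) / n%:R) @ \oo --> L.
Proof.
have Z_gt0 := hawkes_mgf_gt0.
have ln_le n : `|ln (Z n)| <= `|t| * n%:R := abs_ln_hawkes_mgf n.
case: (lerP 0 t) => [t_ge0|t_lt0].
- have Z_ge1 n : 1 <= Z n.
    rewrite -(hawkes_mean_cst a n (fun _ => 0) 1).
    by apply: ler_hawkes_mean => // x _; rewrite -expR0 ler_expR mulr_ge0.
  have lnZ_le n : ln (Z n) <= `|t| * n%:R := le_trans (ler_norm _) (ln_le n).
  apply: (fekete (fun n => ln_ge0 (Z_ge1 n))) lnZ_le => n m.
  rewrite -lnM ?posrE // ler_ln ?posrE ?mulr_gt0 //.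
  exact: hawkes_mgf_supermul.
- have Z_le1 n : Z n <= 1.
    rewrite -(hawkes_mean_cst a n (fun _ => 0) 1).
    by apply: ler_hawkes_mean => // x _; rewrite -expR0 ler_expR nmulr_rle0.
  have lnZ_le n : - ln (Z n) <= `|t| * n%:R.
    by rewrite lerNl; exact: lerNnormlW (ln_le n).
  have lnZ_ge0 n : 0 <= - ln (Z n) by rewrite oppr_ge0 ln_le0.
  have [|L HL] := fekete lnZ_ge0 _ lnZ_le.
    move=> n m; rewrite -opprD lerN2 -lnM ?posrE // ler_ln ?posrE ?mulr_gt0 //.
    exact/hawkes_mgf_submul/ltW.
  exists (- L); rewrite (_ : (fun n => _) = (fun n => - (- ln (Z n) / n%:R))).
    exact: cvgN.
  by apply: funext => n; rewrite mulNr opprK.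
Qed.

End LogMomentGenerating.

Unset Implicit Arguments.
Theorem theorem4p5 (d : measure_display) (T : measurableType d)
  (R : realType) (P : probability T R) (a : nat -> R) (xi : nat -> T -> R) :
  dthp_kernel a -> is_DTHP P a xi ->
  exists Gamma : R -> R, forall t : R,
    (fun n : nat =>
       ln (fine ('E_P[fun w => expR (t * H xi n w)])%E) / n%:R)
      @ \oo --> Gamma t.
Proof.
move=> ker dthp.
have /choice[Gamma Gamma_lim] : forall t : R, exists L : R,
    (fun n => ln (hawkes_mean a (fun _ => 0) n (expcount t)) / n%:R) @ \oo --> L.
  by move=> t; exact: cvg_ln_hawkes_mgf (dthp_kernel_ge0 ker) (admissible0 ker).
exists Gamma => t.
under eq_fun do rewrite (fine_expectation_expH ker dthp).
exact: Gamma_lim.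
Qed.
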